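(* Let $G$ be a graph with $\mathcal{P}(G)=\mathcal{T}(G)$. Then $G$ contains no induced subgraph that is a 2-plex on 4 vertices, and no induced cycle (hole) of length at least 4 whose length is not a multiple of 3.
   Context: All graphs are simple and connected. A 2-plex is a vertex set $K$ such that $G[K]$ has minimum degree at least $|K|-2$. A hole is an induced cycle of length at least 4. A co-2-plex is a vertex set inducing a subgraph of maximum degree at most 1. $\mathcal{P}(G)=\mathrm{conv}\{\chi^S : S\text{ co-2-plex of } G\}$. $\mathcal{T}(G)$ is the polytope of $x\in\mathbb{R}^V$ satisfying $0\le x\le 1$ and $x(W)+(|W|-1)x_w\le|W|$ for all $w\in V$ and $W\subseteq N(w)$, where $x(A)=\sum_{a\in A}x_a$. *)

From mathcomp Require Import all_boot all_order all_algebra.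
From mathcomp Require Import reals.
Set Implicit Arguments. Unset Strict Implicit. Unset Printing Implicit Defensive.
Import Order.TTheory GRing.Theory Num.Theory.
Local Open Scope ring_scope.

Section Defs.
Variable T : finType.
Variable e : rel T.

Definition simple_graph : Prop := symmetric e /\ irreflexive e.
Definition connected_graph : Prop := forall x y : T, connect e x y.

Definition nbr (w : T) : {set T} := [set u | e w u].

Definition two_plex (K : {set T}) : Prop :=
  forall v, v \in K -> (#|K| - 2 <= #|[set u in K | e v u]|)%N.

Definition co2plex (S : {set T}) : bool :=
  [forall v in S, #|[set u in S | e v u]| <= 1]%N.

Definition hole (c : seq T) : Prop :=
  match c with
  | [::] => False
  | x0 :: _ =>
    [/\ uniq c, (4 <= size c)%N &
        forall i j, (i < size c)%N -> (j < size c)%N ->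
          e (nth x0 c i) (nth x0 c j) =
          (j == (i.+1 %% size c)%N) || (i == (j.+1 %% size c)%N)]
  end.

Variable R : realType.

Definition chi (S : {set T}) : T -> R := fun v => if v \in S then 1 else 0.

Definition in_P (x : T -> R) : Prop :=
  exists lam : {set T} -> R,
    [/\ forall S, 0 <= lam S,
        \sum_(S : {set T} | co2plex S) lam S = 1 &
        forall v, x v = \sum_(S : {set T} | co2plex S) lam S * chi S v].

Definition in_T (x : T -> R) : Prop :=
  (forall v, 0 <= x v <= 1) /\
  forall (w : T) (W : {set T}), W \subset nbr w ->
    \sum_(a in W) x a + (#|W|%:R - 1) * x w <= #|W|%:R.

End Defs.

(* A point x in T(G) \ P(G) is obtained by spreading a constant t over a vertex
   set A: the T-inequalities only see the maximum degree of G[A], whereas every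
   co-2-plex meets A in few vertices, which bounds x(A) on P(G).  A 2-plex K on
   4 vertices has degree at most 3 in G[K] and meets a co-2-plex in at most 2
   vertices, so t = 3/5 gives x(K) = 12/5 > 2.  A hole C of length k is
   2-regular and a co-2-plex contains at most two of any three consecutive
   vertices of C, hence at most 2k/3 of them, and at most (2k - 1)/3 when 3 does
   not divide k; t = 2/3 gives x(C) = 2k/3. *)

From mathcomp Require Import all_boot all_order all_algebra.
From mathcomp Require Import reals.
From mathcomp Require Import zify lra.
Set Implicit Arguments. Unset Strict Implicit. Unset Printing Implicit Defensive.
Import Order.TTheory GRing.Theory Num.Theory.

Lemma sum_nat_card (I : finType) (P : {pred I}) : \sum_i (i \in P : nat) = #|P|.
Proof. by rewrite -sum1_card [RHS]big_mkcond; apply: eq_bigr => i _; case: (i \in P). Qed.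

Lemma ordSS_neq k (i : 'I_k) : 2 < k -> ordS (ordS i) != i.
Proof.
move=> k3; apply/eqP => /(congr1 val) /=.
have ik := ltn_ord i.
case: (ltnP i.+1 k) => h1.
  rewrite (modn_small h1); case: (ltnP i.+2 k) => h2.
    by rewrite (modn_small h2); lia.
  have -> : i.+2 = k by lia.
  by rewrite modnn; lia.
have -> : i.+1 = k by lia.
by rewrite modnn modn_small; lia.
Qed.

Lemma card_cyclic_window_le k (P : {pred 'I_k}) :
  (forall i, (i \in P) + (ordS i \in P) + (ordS (ordS i) \in P) <= 2) -> 3 * #|P| <= 2 * k.
Proof.
move=> hP.
have shift (g : 'I_k -> 'I_k) : injective g -> \sum_i (g i \in P : nat) = #|P|.
  by move=> g_inj; rewrite -sum_nat_card [RHS](reindex_inj g_inj).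
have : \sum_i ((i \in P) + (ordS i \in P) + (ordS (ordS i) \in P)) <= \sum_(i : 'I_k) 2.
  by apply: leq_sum => i _; exact: hP.
rewrite !big_split /= sum_nat_const card_ord sum_nat_card (shift _ (@ordS_inj k)).
rewrite (shift (fun i => ordS (ordS i))); last by move=> i j /ordS_inj/ordS_inj.
by set n := #|P|; lia.
Qed.

Section Graph.
Variables (T : finType) (e : rel T).
Hypotheses (e_sym : symmetric e) (e_irr : irreflexive e).

Lemma card_nbr_in_lt (K : {set T}) (w : T) :
  w \in K -> #|[set u in K | e w u]| < #|K|.
Proof.
move=> wK; apply: proper_card; apply/properP; split.
  by apply/subsetP => u; rewrite inE => /andP[].
by exists w; rewrite // inE e_irr andbF.
Qed.

Lemma co2plex_nbr_eq (S : {set T}) (v a b : T) :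
  co2plex e S -> [/\ v \in S, a \in S & b \in S] -> e v a -> e v b -> a = b.
Proof.
move=> /forall_inP coS [vS aS bS] va vb; apply/eqP; apply: contraTT (coS v vS).
move=> ab; rewrite -ltnNge; apply: leq_trans (_ : #|[set a; b]| <= _).
  by rewrite cards2 ab.
by apply/subset_leq_card/subsetP => u; rewrite !inE => /orP[] /eqP ->; rewrite ?aS ?bS.
Qed.

Lemma card_set_in_sum (K : {set T}) (P : pred T) :
  #|[set u in K | P u]| = \sum_(u in K) P u.
Proof.
rewrite -sum1_card big_mkcond [RHS]big_mkcond /=; apply: eq_bigr => u _.
by rewrite inE; case: (u \in K); case: (P u).
Qed.

Lemma two_plex4_meet_co2plex (K S : {set T}) :
  #|K| = 4 -> two_plex e K -> co2plex e S -> #|K :&: S| <= 2.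
Proof.
move=> K4 plexK coS; rewrite leqNgt; apply/negP.
move=> /card_gt2P [a [b [c [[aKS bKS cKS] [ab bc ca]]]]].
move: aKS bKS cKS; rewrite !inE => /andP[aK aS] /andP[bK bS] /andP[cK cS].
have ac : a != c by rewrite eq_sym.
have [d dK] : exists2 d, d \in K & d \notin a |: (b |: [set c]).
  apply/subsetPn; apply/negP => /subset_leq_card.
  by rewrite K4 !cardsU1 cards1; case: (a \notin _); case: (b \notin _).
rewrite !inE !negb_or => /and3P[da db dc].
have [ad bd cd] : [/\ a != d, b != d & c != d] by rewrite !(eq_sym _ d).
have K_abcd : K = a |: (b |: (c |: [set d])).
  apply/eqP; rewrite eq_sym eqEcard; apply/andP; split.
    by apply/subsetP => u; rewrite !inE => /or4P[] /eqP ->.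
  by rewrite K4 !cardsU1 cards1 !inE !negb_or ab ac ad bc bd cd.
have degK v : v \in K -> 2 <= e v a + e v b + e v c + e v d.
  move=> vK; have := plexK v vK; rewrite K4 card_set_in_sum K_abcd.
  by rewrite !big_setU1 ?big_set1 /= ?addnA // !inE ?negb_or ?ab ?ac ?ad ?bc ?bd ?cd.
(* Each of a, b, c needs two neighbours in K but has at most one among a, b, c. *)
have one_nbr v x y : [/\ v \in S, x \in S & y \in S] -> x != y -> ~~ (e v x && e v y).
  by move=> vxyS; apply: contra => /andP[vx vy]; rewrite (co2plex_nbr_eq coS vxyS vx vy).
have := one_nbr a b c (And3 aS bS cS) bc; have := one_nbr b a c (And3 bS aS cS) ac.
have := one_nbr c a b (And3 cS aS bS) ab.
have := degK a aK; have := degK b bK; have := degK c cK.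
rewrite (e_sym b a) (e_sym c a) (e_sym c b) !e_irr.
by case: (e a b); case: (e a c); case: (e a d); case: (e b c); case: (e b d); case: (e c d).
Qed.

Section Hole.
Variables (x0 : T) (s : seq T).
Hypothesis hole_s : hole e (x0 :: s).
Local Notation c := (x0 :: s).
Local Notation k := (size c).
Let f (i : 'I_k) : T := nth x0 c i.

Lemma hole_vertex_inj : injective f.
Proof.
by have [c_uniq _ _] := hole_s; move=> i j /eqP; rewrite /f nth_uniq // => /eqP/val_inj.
Qed.

Lemma hole_adj (i j : 'I_k) : e (f i) (f j) = (j == ordS i) || (i == ordS j).
Proof. by have [_ _ c_adj] := hole_s; rewrite /f c_adj. Qed.

Lemma hole_vertices : [set v | v \in c] = [set f i | i : 'I_k].
Proof.
apply/setP => v; rewrite inE; apply/idP/imsetP => [vc | [i _ ->]]; last exact: mem_nth.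
have vk : index v c < k by rewrite index_mem.
by exists (Ordinal vk); rewrite // /f nth_index.
Qed.

Lemma hole_deg_le2 (w : T) :
  w \in c -> #|[set u in [set v | v \in c] | e w u]| <= 2.
Proof.
move=> wc; have /imsetP[i _ ->] : w \in [set f i | i : 'I_k].
  by rewrite -hole_vertices inE.
rewrite hole_vertices.
apply: leq_trans (_ : #|[set f (ordS i); f (ord_pred i)]| <= 2); last first.
  by rewrite cards2; case: (_ != _).
apply/subset_leq_card/subsetP => _ /setIdP[/imsetP[j _ ->]].
rewrite hole_adj !inE => /orP[] /eqP ->; first by rewrite eqxx.
by rewrite ordSK eqxx orbT.
Qed.

Lemma hole_meet_co2plex (S : {set T}) :
  co2plex e S -> 3 * #|[set v | v \in c] :&: S| <= 2 * k.
Proof.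
move=> coS; have k3 : 2 < k by have [_ k4 _] := hole_s; apply: leq_trans k4.
have -> : [set v | v \in c] :&: S = f @: [set i | f i \in S].
  apply/setP => v; rewrite hole_vertices inE; apply/andP/imsetP.
    by move=> [/imsetP[i _ ->] fiS]; exists i; rewrite ?inE.
  by move=> [i]; rewrite inE => fiS ->; rewrite imset_f.
rewrite card_imset; last exact: hole_vertex_inj.
apply: card_cyclic_window_le => i; rewrite !inE.
case iS: (f i \in S); case jS: (f (ordS i) \in S); case lS: (f (ordS (ordS i)) \in S) => //.
have := ordSS_neq i k3; apply: contraNT => _; apply/eqP/hole_vertex_inj.
by apply: (co2plex_nbr_eq coS (And3 jS lS iS)); rewrite hole_adj eqxx ?orbT.
Qed.

End Hole.
End Graph.

Local Open Scope ring_scope.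

Section ConstOn.
Variables (T : finType) (e : rel T) (R : realType).

Definition const_on (A : {set T}) (t : R) : T -> R :=
  fun v => if v \in A then t else 0.

Lemma sum_const_on (A W : {set T}) (t : R) :
  \sum_(a in W) const_on A t a = t * #|W :&: A|%:R.
Proof.
rewrite (big_setID A) /= [X in _ + X]big1 ?addr0; last first.
  by move=> a; rewrite inE /const_on => /andP[/negbTE ->].
rewrite (eq_bigr (fun=> t)) ?sumr_const ?mulr_natr //.
by move=> a; rewrite inE /const_on => /andP[_ ->].
Qed.

Lemma in_P_sum_le (x : T -> R) (A : {set T}) (b : R) :
  (forall S, co2plex e S -> #|A :&: S|%:R <= b) ->
  in_P e x -> \sum_(v in A) x v <= b.
Proof.
move=> meetA [lam [lam_ge0 lam_sum1 x_eq]].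
rewrite (eq_bigr _ (fun v _ => x_eq v)) exchange_big /=.
apply: (@le_trans _ _ (\sum_(S | co2plex e S) lam S * b)); last first.
  by rewrite -mulr_suml lam_sum1 mul1r.
apply: ler_sum => S coS; rewrite -mulr_sumr ler_wpM2l //.
by rewrite [X in X <= _](sum_const_on S A 1) mul1r meetA.
Qed.

(* [m] stands for #|W :&: A| and [n] for #|W| in the T-inequality at [w \in A]. *)
Lemma in_T_const_on (A : {set T}) (t : R) (D : nat) :
  0 <= t <= 1 ->
  (forall w, w \in A -> #|[set u in A | e w u]| <= D)%N ->
  (forall m n : nat, (m <= n)%N -> (m <= D)%N -> t * m%:R + (n%:R - 1) * t <= n%:R) ->
  in_T e (const_on A t).
Proof.
move=> /andP[t_ge0 t_le1] degA tD; split.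
  by move=> v; rewrite /const_on; case: (v \in A); rewrite ?t_ge0 ?t_le1 ?lexx ?ler01.
move=> w W subW; rewrite sum_const_on.
have mW : (#|W :&: A| <= #|W|)%N by rewrite subset_leq_card ?subsetIl.
rewrite /const_on; case: ifP => wA.
  apply: tD => //; apply: leq_trans (degA w wA); apply: subset_leq_card.
  apply/subsetP => u; rewrite !inE => /andP[uW ->] /=.
  by move/subsetP: subW => /(_ u uW); rewrite inE.
rewrite mulr0 addr0.
have : #|W :&: A|%:R <= #|W|%:R :> R by rewrite ler_nat.
have : 0 <= #|W :&: A|%:R :> R by [].
nra.
Qed.

Lemma const_on_notin_P (A : {set T}) (t b : R) :
  (forall S, co2plex e S -> #|A :&: S|%:R <= b) -> b < t * #|A|%:R ->
  ~ in_P e (const_on A t).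
Proof.
move=> meetA bA /(in_P_sum_le meetA); rewrite sum_const_on setIid.
by rewrite leNgt bA.
Qed.

End ConstOn.

Section PolytopesEqual.
Variables (R : realType) (T : finType) (e : rel T).
Hypotheses (e_sym : symmetric e) (e_irr : irreflexive e).
Hypothesis P_eq_T : forall x : T -> R, in_P e x <-> in_T e x.

Lemma P_eq_T_no_two_plex4 (K : {set T}) : #|K| = 4%N -> ~ two_plex e K.
Proof.
move=> K4 plexK.
have xT : in_T e (const_on K (3/5 : R)).
  apply: (in_T_const_on (D := 3)); first by apply/andP; split; lra.
    by move=> w wK; have := card_nbr_in_lt e_irr wK; rewrite K4.
  by move=> m n; rewrite -!(ler_nat R) => ? ?; lra.
apply: (const_on_notin_P (b := 2)) ((P_eq_T _).2 xT).
  by move=> S coS; rewrite ler_nat (two_plex4_meet_co2plex e_sym e_irr K4 plexK coS).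
by rewrite K4; lra.
Qed.

Lemma P_eq_T_hole_dvd3 (c : seq T) : hole e c -> (3 %| size c)%N.
Proof.
case: c => [|x0 s] // hole_c; apply/negPn/negP => k_ndvd3.
set k := size (x0 :: s); pose A := [set v | v \in x0 :: s].
have cardA : #|A| = k.
  by rewrite cardsE; case: hole_c => c_uniq _ _; exact/card_uniqP.
have xT : in_T e (const_on A (2/3 : R)).
  apply: (in_T_const_on (D := 2)); first by apply/andP; split; lra.
    by move=> w; rewrite inE; exact: hole_deg_le2.
  by move=> m n; rewrite -!(ler_nat R) => ? ?; lra.
apply: (const_on_notin_P (b := (2 * k%:R - 1) / 3)) ((P_eq_T _).2 xT).
  move=> S coS; have := hole_meet_co2plex hole_c coS; rewrite -/k -/A => meetS.
  have : (3 * #|A :&: S| + 1 <= 2 * k)%N by lia.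
  by rewrite -(ler_nat R) natrD !natrM => ?; lra.
by rewrite cardA; lra.
Qed.

End PolytopesEqual.

Theorem mainTheorem13 (R : realType) (T : finType) (e : rel T) :
  simple_graph e -> connected_graph e ->
  (forall x : T -> R, in_P e x <-> in_T e x) ->
  (forall K : {set T}, #|K| = 4%N -> ~ two_plex e K) /\
  (forall c : seq T, hole e c -> (3 %| size c)%N).
Proof.
move=> [e_sym e_irr] _ P_eq_T; split.
  exact: P_eq_T_no_two_plex4.
exact: P_eq_T_hole_dvd3.
Qed.
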